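(* Fix $q\ge 2$ and a positive integer $d$. There exists a constant $C>0$ such that for all sufficiently large $n$ and all $k$ with $d\le k\le n$, $$a_q(n,k,d)\le q^{\,n-C\frac{(n-2k)k^{d-1}}{q^k}}.$$
   Context: $\Sigma_q=\{0,\dots,q-1\}$, $w_H$ is Hamming weight. A vector $\vec a\in\Sigma_q^n$ is a $(d,k)$-window weight limited (WWL) vector if $n<k$ or $w_H(a_i,\dots,a_{i+k-1})\ge d$ for all $i\in[1,n-k+1]$. $a_q(n,k,d)$ is the number of $(d,k)$-WWL vectors in $\Sigma_q^n$. *)

From mathcomp Require Import all_boot.
Set Implicit Arguments. Unset Strict Implicit. Unset Printing Implicit Defensive.

Definition wH (q : nat) (s : seq 'I_q) : nat := count (fun x : 'I_q => val x != 0) s.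

Definition wwl (q n k d : nat) (a : n.-tuple 'I_q) : bool :=
  (n < k) || [forall i : 'I_n.+1, (i + k <= n) ==> (d <= wH (take k (drop i a)))].

Definition a_q (q n k d : nat) : nat := #|[set a : n.-tuple 'I_q | wwl k d a]|.

From Stdlib Require Import Arith Reals Lra.
From mathcomp Require Import all_boot zify.

(* Cut a word into blocks of length L = 2k.  Every window inside a block is a window of the
   word, so a_q(n,k,d) <= q^r * a_q(2k,k,d)^m with n = r + 2km, and
   a_q(2k,k,d) = q^(2k) - B <= q^(2k) exp(-B/q^(2k)), where B counts the words of length 2k
   having a window of weight < d.  Such words are produced with their first light window at any
   of k - d + 1 positions, which gives B >= c k^d q^k; hence the exponent loses at least
   m B/q^(2k) >= c (n - 2k) k^(d-1) / q^k. *)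

Lemma wwlP q n k d (a : n.-tuple 'I_q) :
  reflect (n < k \/ forall i, i + k <= n -> d <= wH (take k (drop i a))) (wwl k d a).
Proof.
apply: (iffP orP) => [[->|/forallP H]|[->|H]]; [by left | right | by left | right].
- move=> i hi; have hi' : i < n.+1 by lia.
  by move: (H (Ordinal hi')) => /implyP /= ->.
- by apply/forallP => i; apply/implyP => hi; apply: H.
Qed.

Definition wwl_set q n k d := [set a : n.-tuple 'I_q | wwl k d a].

Lemma card_wwl_set_add q n L k d : k <= L ->
  #|wwl_set q (n + L) k d| <= #|wwl_set q n k d| * #|wwl_set q L k d|.
Proof.
move=> hkL.
have size_take_n (a : (n + L).-tuple 'I_q) : size (take n a) == n.
  by rewrite size_takel // size_tuple leq_addr.
have size_drop_n (a : (n + L).-tuple 'I_q) : size (drop n a) == L.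
  by rewrite size_drop size_tuple addKn.
pose split_word a := (Tuple (size_take_n a), Tuple (size_drop_n a)).
have split_inj : injective split_word.
  move=> a b [] ha hb; apply: val_inj => /=.
  by rewrite -(cat_take_drop n a) -(cat_take_drop n b) ha hb.
rewrite -cardsX -(card_imset _ split_inj); apply: subset_leq_card.
apply/subsetP => _ /imsetP [a + ->]; rewrite !inE => /wwlP ha.
apply/andP; split; apply/wwlP.
- have [|hkn] := ltnP n k; first by left.
  right => i hi; rewrite /= take_drop take_takel -?take_drop; last by lia.
  by case: ha => [|]; [lia | apply; lia].
- right => i hi /=; rewrite drop_drop.
  by case: ha => [|]; [lia | apply; lia].
Qed.

Lemma card_wwl_set_blocks q r m L k d : k <= L ->
  #|wwl_set q (r + m * L) k d| <= q ^ r * #|wwl_set q L k d| ^ m.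
Proof.
move=> hkL; elim: m => [|m IH].
  by rewrite mul0n addn0 muln1 -[X in _ <= X ^ _]card_ord -card_tuple max_card.
rewrite mulSn addnCA addnC; apply: leq_trans (card_wwl_set_add _ _ _ _ _ hkL) _.
by rewrite expnS mulnCA [_ * (_ * _)]mulnC leq_mul2r IH orbT.
Qed.

Lemma wH_take_cat q k (p s : seq 'I_q) : size p <= k -> wH p <= wH (take k (p ++ s)).
Proof. by move=> hp; rewrite take_cat ltnNge hp /= /wH count_cat leq_addr. Qed.

Lemma size_take_ord (T : Type) n (t : 'I_n.+1) (f : n.-tuple T) : size (take t f) = t.
Proof. by rewrite size_takel // size_tuple -ltnS. Qed.

Section BadWords.

Variables q k d : nat.
Hypotheses (hq : 1 < q) (hd : 0 < d) (hdk : d <= k).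

Let one : 'I_q := Ordinal hq.
Let zero : 'I_q := Ordinal (ltnW hq).

Implicit Types (t : 'I_(k - d).+1) (f : (k - d).-tuple 'I_q) (S : {set 'I_(k - d)}).

Definition set_word S : seq 'I_q :=
  [seq if i \in S then one else zero | i <- enum 'I_(k - d)].

Lemma size_set_word S : size (set_word S) = k - d.
Proof. by rewrite size_map size_enum_ord. Qed.

Lemma wH_set_word S : wH (set_word S) = #|S|.
Proof.
rewrite /wH count_map (@eq_count _ _ (mem S)); last by move=> i /=; case: (i \in S).
by rewrite cardE enumT /enum_mem size_filter.
Qed.

Lemma set_word_inj : injective set_word.
Proof.
move=> S1 S2 /eq_in_map hS; apply/setP => i.
by have := hS i (mem_enum _ i); case: (i \in S1); case: (i \in S2).
Qed.

(* The block of d ones makes every window starting before t + d heavy, while the window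
   starting at t + d sees only the d - 1 ones of [set_word S]. *)
Definition bad_word t f S : seq 'I_q :=
  take t f ++ nseq d one ++ set_word S ++ nseq d zero ++ drop t f.

Lemma size_bad_word t f S : size (bad_word t f S) == k + k.
Proof.
rewrite !size_cat size_take_ord size_set_word !size_nseq size_drop size_tuple.
by have := ltn_ord t; lia.
Qed.

Lemma wH_bad_window t f S : wH (take k (drop (t + d) (bad_word t f S))) = #|S|.
Proof.
rewrite /bad_word catA drop_size_cat ?size_cat ?size_take_ord ?size_nseq //.
rewrite take_cat size_set_word ltnNge leq_subr /= subKn // /wH count_cat.
by rewrite take_cat size_nseq ltnn subnn take0 cats0 count_nseq mul0n addn0 -/(wH _)
  wH_set_word.
Qed.

Lemma wH_good_window t f S j : #|S| = d - 1 -> j < t + d ->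
  d <= wH (take k (drop j (bad_word t f S))).
Proof.
move=> hS hj; have ht := ltn_ord t; rewrite /bad_word drop_cat size_take_ord.
have [hjt | htj] := leqP j t.
- case: ltnP => [_ | hjt'].
    rewrite catA; apply: leq_trans _ (wH_take_cat _ _ _ _ _); last first.
      by rewrite size_cat size_drop size_take_ord size_nseq; lia.
    by rewrite /wH count_cat count_nseq /= mul1n leq_addl.
  have -> : j = t by lia.
  rewrite subnn drop0; apply: leq_trans _ (wH_take_cat _ _ _ _ _); last first.
    by rewrite size_nseq; lia.
  by rewrite /wH count_nseq /= mul1n.
- rewrite ltnNge (ltnW htj) /= drop_cat size_nseq (_ : j - t < d); last by lia.
  rewrite drop_nseq catA; apply: leq_trans _ (wH_take_cat _ _ _ _ _); last first.
    by rewrite size_cat size_nseq size_set_word; lia.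
  by rewrite /wH count_cat count_nseq /= mul1n -/(wH _) wH_set_word hS; lia.
Qed.

Lemma bad_word_start_leq t f S t' f' S' : #|S| = d - 1 -> #|S'| = d - 1 ->
  bad_word t f S = bad_word t' f' S' -> t' <= t.
Proof.
move=> hS hS' hw; rewrite leqNgt; apply/negP => htt'.
have := wH_good_window t' f' S' (t + d) hS'; rewrite -hw wH_bad_window hS ltn_add2r htt'.
by move=> /(_ isT); lia.
Qed.

Lemma bad_word_inj t1 f1 S1 t2 f2 S2 : #|S1| = d - 1 -> #|S2| = d - 1 ->
  bad_word t1 f1 S1 = bad_word t2 f2 S2 -> (t1, f1, S1) = (t2, f2, S2).
Proof.
move=> hS1 hS2 hw.
have ht : t1 = t2.
  apply/val_inj/eqP; rewrite eqn_leq.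
  by rewrite (bad_word_start_leq _ _ _ _ _ _ hS2 hS1 (esym hw))
    (bad_word_start_leq _ _ _ _ _ _ hS1 hS2 hw).
subst t2; move/eqP: hw; rewrite /bad_word.
rewrite eqseq_cat ?size_take_ord // => /andP [/eqP hpre].
rewrite eqseq_cat // => /andP [_].
rewrite eqseq_cat ?size_set_word // => /andP [/eqP /set_word_inj -> ].
rewrite eqseq_cat // => /andP [_ /eqP hsuf].
suff -> : f1 = f2 by [].
by apply: val_inj; rewrite /= -(cat_take_drop t1 f1) hpre hsuf cat_take_drop.
Qed.

Lemma card_not_wwl_lb :
  (k - d).+1 * q ^ (k - d) * 'C(k - d, d - 1) <= #|~: wwl_set q (k + k) k d|.
Proof.
pose D := [set x : 'I_(k - d).+1 * (k - d).-tuple 'I_q * {set 'I_(k - d)}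
             | #|x.2| == d - 1].
have cardD : #|D| = (k - d).+1 * q ^ (k - d) * 'C(k - d, d - 1).
  have -> : D = setX setT [set S : {set 'I_(k - d)} | #|S| == d - 1].
    by apply/setP => -[tf S]; rewrite !inE.
  by rewrite cardsX card_draws cardsT card_prod card_tuple !card_ord.
pose F x : (k + k).-tuple 'I_q := Tuple (size_bad_word x.1.1 x.1.2 x.2).
have F_inj : {in D &, injective F}.
  move=> [[t1 f1] S1] [[t2 f2] S2]; rewrite !inE /= => /eqP hS1 /eqP hS2 hF.
  exact: bad_word_inj hS1 hS2 (congr1 val hF).
rewrite -cardD -(card_in_imset F_inj); apply: subset_leq_card.
apply/subsetP => _ /imsetP [[[t f] S] + ->]; rewrite !inE /= => /eqP hS.
apply/wwlP => -[|hgood]; first by lia.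
have ht := ltn_ord t.
by have := hgood (t + d); rewrite wH_bad_window hS; lia.
Qed.

End BadWords.

Lemma card_not_wwl_gt0 q k d : 0 < q -> 0 < d -> 0 < k ->
  0 < #|~: wwl_set q (k + k) k d|.
Proof.
move=> hq hd hk; apply/card_gt0P; exists [tuple of nseq (k + k) (Ordinal hq)].
rewrite !inE; apply/wwlP => -[|hgood]; first by lia.
by have := hgood 0; rewrite drop0 take_nseq ?leq_addr // /wH count_nseq /=; lia.
Qed.

Lemma expn_le_ffact n m : m <= n -> (n - m).+1 ^ m <= n ^_ m.
Proof.
elim: m n => [|m IH] n hmn; first by rewrite expn0 ffactn0.
rewrite ffactnS expnS (_ : (n - m.+1).+1 = n - m); last by lia.
apply: leq_mul; first by lia.
by have := IH n.-1; rewrite (_ : (n.-1 - m).+1 = n - m); lia.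
Qed.

Lemma expn_le_binomial d k : 0 < d -> 4 * d <= k ->
  k ^ d <= 2 ^ d * (d - 1)`! * ((k - d).+1 * 'C(k - d, d - 1)).
Proof.
case: d => // e _ hk; rewrite subSS subn0.
have hff : (k - e.+1 - e).+1 ^ e <= 'C(k - e.+1, e) * e`!.
  by rewrite bin_ffact expn_le_ffact; lia.
apply: (@leq_trans (k * (2 * (k - e.+1 - e).+1) ^ e)).
  rewrite expnS leq_mul //; have [-> // | he] := posnP e.
  by rewrite leq_exp2r //; lia.
rewrite expnMn expnS.
have -> : 2 * 2 ^ e * e`! * ((k - e.+1).+1 * 'C(k - e.+1, e))
        = (2 * (k - e.+1).+1) * (2 ^ e * ('C(k - e.+1, e) * e`!)).
  by rewrite !mulnE; ring.
by apply: leq_mul; [lia | rewrite leq_mul2l hff orbT].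
Qed.

(* The first factor absorbs the windows with k < 4d, the second one the binomial estimate. *)
Definition wwl_const q d := (4 * d) ^ d * q ^ (4 * d) * (2 ^ d * (d - 1)`! * q ^ d).

Lemma card_not_wwl_ge q k d : 1 < q -> 0 < d -> d <= k ->
  k ^ d * q ^ k <= wwl_const q d * #|~: wwl_set q (k + k) k d|.
Proof.
move=> hq hd hdk; rewrite /wwl_const.
have hq0 : 0 < q := ltnW hq.
have hC : 0 < 2 ^ d * (d - 1)`! * q ^ d by rewrite !muln_gt0 !expn_gt0 fact_gt0 hq0.
have [hk | hk] := ltnP k (4 * d).
- apply: leq_trans (leq_pmulr _ (card_not_wwl_gt0 _ _ _ hq0 hd (leq_trans hd hdk))).
  apply: leq_trans (leq_pmulr _ hC).
  by rewrite leq_mul ?leq_exp2r ?leq_pexp2l // ltnW.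
- have hq_split : q ^ k = q ^ d * q ^ (k - d) by rewrite -expnD subnKC.
  apply: leq_trans _ (leq_mul (leqnn _) (card_not_wwl_lb _ _ _ hq hd hdk)).
  rewrite hq_split.
  have hP : 0 < (4 * d) ^ d * q ^ (4 * d) by rewrite muln_gt0 !expn_gt0 hq0; lia.
  apply: leq_trans (leq_pmull _ hP) _.
  have -> : (4 * d) ^ d * q ^ (4 * d) * (2 ^ d * (d - 1)`! * q ^ d) *
            ((k - d).+1 * q ^ (k - d) * 'C(k - d, d - 1))
          = (4 * d) ^ d * q ^ (4 * d) *
            ((2 ^ d * (d - 1)`! * ((k - d).+1 * 'C(k - d, d - 1))) * (q ^ d * q ^ (k - d))).
    by rewrite !mulnE; ring.
  by rewrite leq_mul2l leq_mul2r expn_le_binomial ?orbT.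
Qed.

Open Scope R_scope.

Lemma INR_expn (a b : nat) : INR (a ^ b)%N = INR a ^ b.
Proof. by elim: b => [|b IH] //; rewrite expnS mulnE mult_INR IH. Qed.

Lemma exp_pow x m : exp x ^ m = exp (INR m * x).
Proof.
elim: m => [|m IH]; first by rewrite /= Rmult_0_l exp_0.
by rewrite S_INR Rmult_plus_distr_r Rmult_1_l exp_plus -IH /=; ring.
Qed.

Lemma exp_le_exp_of_le x y : x <= y -> exp x <= exp y.
Proof. by case=> [/exp_increasing/Rlt_le | ->] //; apply: Rle_refl. Qed.

Lemma pow_le_exp_deficit (x y : R) (m : nat) : 0 <= x -> 0 < x + y ->
  x ^ m <= (x + y) ^ m * exp (- (INR m * y / (x + y))).
Proof.
move=> hx hxy.
have hx1 : x <= (x + y) * exp (- (y / (x + y))).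
  have {1}-> : x = (x + y) * (1 + - (y / (x + y))) by field; lra.
  by apply: Rmult_le_compat_l; [lra | apply: exp_ineq1_le].
apply: Rle_trans (pow_incr _ _ _ (conj hx hx1)) _.
rewrite Rpow_mult_distr exp_pow; right; congr (_ * exp _); field; lra.
Qed.

Lemma deficit_le (M B K k Q n m : R) : 0 < M -> 0 < Q -> 0 <= K -> 0 <= m ->
  k * K * Q <= M * B -> n - 2 * k <= 2 * k * m ->
  (n - 2 * k) * K / (2 * M * Q) <= m * B / (Q * Q).
Proof.
move=> hM hQ hK hm hkey hn.
have -> : (n - 2 * k) * K / (2 * M * Q) = (n - 2 * k) * (K * Q) * / (2 * M * Q * Q).
  by field; lra.
have -> : m * B / (Q * Q) = 2 * m * (M * B) * / (2 * M * Q * Q) by field; lra.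
apply: Rmult_le_compat_r.
  by left; apply: Rinv_0_lt_compat; repeat apply: Rmult_lt_0_compat; lra.
have hKQ : 0 <= K * Q by apply: Rmult_le_pos; lra.
have h1 := Rmult_le_compat_r _ _ _ hKQ hn.
have h2 := Rmult_le_compat_l _ _ _ hm hkey.
nra.
Qed.

Lemma a_q_le_exp_deficit q n k d : (0 < q)%N ->
  INR (a_q q n k d) <= INR q ^ n *
    exp (- (INR (n %/ (k + k)) * INR #|~: wwl_set q (k + k) k d| / INR q ^ (k + k))).
Proof.
move=> hq; set L := (k + k)%N; set m := (n %/ L)%N; set r := (n %% L)%N.
set G := #|wwl_set q L k d|; set B := #|~: wwl_set q L k d|.
have hq0 : 0 < INR q by apply: (lt_INR 0); apply/ltP.
have hn : n = (r + m * L)%N by rewrite /r /m addnC -divn_eq.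
have ha : (a_q q n k d <= q ^ r * G ^ m)%N.
  by have := card_wwl_set_blocks q r m L k d (leq_addr k k); rewrite -hn.
have hGB : INR G + INR B = INR q ^ L.
  by rewrite -plus_INR -addnE cardsC card_tuple card_ord INR_expn.
have hGm := pow_le_exp_deficit (INR G) (INR B) m (pos_INR G).
rewrite hGB in hGm; have {}hGm := hGm (pow_lt _ _ hq0).
apply: Rle_trans (le_INR _ _ (leP ha)) _; rewrite mult_INR !INR_expn.
rewrite {1}hn pow_add mulnC pow_mult Rmult_assoc.
by apply: Rmult_le_compat_l; first by apply: pow_le; lra.
Qed.

Theorem lemma7 (q d : nat) (hq : (2 <= q)%coq_nat) (hd : (1 <= d)%coq_nat) :
  exists C : R, 0 < C /\
  exists N : nat, forall n k : nat, (N <= n)%coq_nat -> (d <= k)%coq_nat -> (k <= n)%coq_nat ->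
    INR (a_q q n k d) <=
    Rpower (INR q)
      (INR n - C * ((INR n - 2 * INR k) * INR k ^ (d - 1)%coq_nat) / INR q ^ k).
Proof.
rewrite -subnE; move/leP: hq => hq; move/leP: hd => hd; set M := wwl_const q d.
have hM : 0 < INR M.
  by apply: (lt_INR 0); apply/ltP; rewrite !muln_gt0 !expn_gt0 fact_gt0; lia.
have hq1 : 1 < INR q by apply: (lt_INR 1); apply/ltP.
have hlnq : 0 < ln (INR q) by rewrite -ln_1; apply: ln_increasing; lra.
exists (1 / (2 * INR M * ln (INR q))); split.
  by apply: Rdiv_lt_0_compat; [lra | repeat apply: Rmult_lt_0_compat; lra].
exists 0%N => n k _ /leP hdk _.
set m := (n %/ (k + k))%N; set B := #|~: wwl_set q (k + k) k d|.
have hkey : (k ^ d * q ^ k <= M * B)%N := card_not_wwl_ge _ _ _ hq hd hdk.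
have hnk : (n <= k * 2 * m + k * 2)%N.
  by have := ltn_pmod n (_ : 0 < k + k)%N; rewrite {1}(divn_eq n (k + k)); lia.
have hQ : 0 < INR q ^ k by apply: pow_lt; lra.
have hdef : (INR n - 2 * INR k) * INR k ^ (d - 1) / (2 * INR M * INR q ^ k)
            <= INR m * INR B / (INR q ^ k * INR q ^ k).
  apply: deficit_le => //; [exact: pow_le (pos_INR _) | exact: pos_INR | |].
  - have := le_INR _ _ (leP hkey); rewrite !mult_INR !INR_expn.
    by rewrite {1}(_ : d = (d - 1).+1) /=; [lra | lia].
  - by have := le_INR _ _ (leP hnk); rewrite !plus_INR !mult_INR /=; lra.
apply: Rle_trans (a_q_le_exp_deficit _ _ _ _ (ltnW hq)) _.
rewrite /Rminus Rpower_plus Rpower_pow /Rpower; last by lra.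
apply: Rmult_le_compat_l; first by apply: pow_le; lra.
apply: exp_le_exp_of_le; rewrite pow_add.
by apply: Rle_trans (Ropp_le_contravar _ _ hdef) _; right; field; lra.
Qed.
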